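(* Let $k\ge1$ and $A,B\in SL(k,\mathbb Z)$. If $S_A$ is of diagonal type and $S_B$ is of non-diagonal type, then $S_A$ is not isomorphic to $S_B$.
   Context: For $A\in SL(k,\mathbb Z)$, $S_A$ denotes the semi-direct product $\mathbb Z\ltimes\mathbb Z^k$ associated with the action of $\mathbb Z$ on $\mathbb Z^k$ given by $m\circ x=A^m x$. $S_A$ is said to be of diagonal type if $A$ is diagonalizable over $\mathbb C$ and all its eigenvalues are different from $1$; it is of non-diagonal type if $A$ is not diagonalizable over $\mathbb C$ and all its eigenvalues are different from $1$. *)

From HB Require Import structures.
From mathcomp Require Import all_boot all_order all_algebra all_field.
Set Implicit Arguments. Unset Strict Implicit. Unset Printing Implicit Defensive.
Import Order.TTheory GRing.Theory Num.Theory.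
Local Open Scope ring_scope.

Definition SLZ (k : nat) (A : 'M[int]_k) : Prop := \det A = 1.

(* integer powers A^m, m in Z (A^-1 = invmx A, a genuine inverse when det A = 1) *)
Definition mxzpow (k : nat) (A : 'M[int]_k) (m : int) : 'M[int]_k :=
  match m with
  | Posz n => A ^+ n
  | Negz n => (invmx A) ^+ n.+1
  end.

Definition SA_carrier (k : nat) : Type := (int * 'cV[int]_k)%type.

Definition SA_mul (k : nat) (A : 'M[int]_k) (g h : SA_carrier k) : SA_carrier k :=
  (g.1 + h.1, g.2 + mxzpow A g.1 *m h.2).

Definition SA_isomorphic (k : nat) (A B : 'M[int]_k) : Prop :=
  exists f : SA_carrier k -> SA_carrier k,
    bijective f /\ forall g h, f (SA_mul A g h) = SA_mul B (f g) (f h).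

Definition mxC (k : nat) (A : 'M[int]_k) : 'M[algC]_k := map_mx intr A.

Definition diagonal_type (k : nat) (A : 'M[int]_k) : Prop :=
  diagonalizable (mxC A) /\ forall a : algC, eigenvalue (mxC A) a -> a != 1.

Definition non_diagonal_type (k : nat) (A : 'M[int]_k) : Prop :=
  ~ diagonalizable (mxC A) /\ forall a : algC, eigenvalue (mxC A) a -> a != 1.

From mathcomp Require Import all_boot all_order all_algebra all_field.
Set Implicit Arguments. Unset Strict Implicit. Unset Printing Implicit Defensive.
Import Order.TTheory GRing.Theory Num.Theory.
Local Open Scope ring_scope.

(* An isomorphism f : S_A -> S_B maps the normal subgroup Z^k into Z^k: the
   integer x |-> (f (0, x)).1 is additive and A-invariant, so it vanishes on
   (A - 1) Z^k, which contains det(A - 1) Z^k with det(A - 1) <> 0 because 1 is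
   not an eigenvalue of A.  So f (0, x) = (0, P x), and P is invertible since
   the same holds for f^-1.  Surjectivity forces the Z-component m of f (1, 0)
   to be a unit, and applying f to (1, 0)(0, x) = (0, A x)(1, 0) gives
   B^m P = P A.  Thus B or B^-1 is similar over C to the diagonalizable A. *)

Lemma morph_add_mulrz (V W : zmodType) (f : V -> W) :
  {morph f : x y / x + y} -> forall x (c : int), f (x *~ c) = f x *~ c.
Proof.
move=> fD.
have f0 : f 0 = 0 by apply: (addIr (f 0)); rewrite -fD !add0r.
have fN x : f (- x) = - f x by apply: (addrI (f x)); rewrite -fD !subrr.
have fn x (n : nat) : f (x *+ n) = f x *+ n.
  by elim: n => [|n IH]; rewrite ?mulr0n // !mulrS fD IH.
by move=> x [n|n]; rewrite ?NegzE ?mulrNz ?fN -!pmulrn fn.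
Qed.

Lemma additive_int_mulmx (m : nat) (psi : 'cV[int]_m -> 'cV[int]_m) :
  {morph psi : x y / x + y} -> exists P : 'M[int]_m, psi =1 mulmx P.
Proof.
move=> psiD.
have psi0 : psi 0 = 0 by apply: (addIr (psi 0)); rewrite -psiD !add0r.
exists (\matrix_(i, j) psi (delta_mx j 0) i 0) => x.
rewrite {1}(matrix_sum_delta x) (big_morph psi psiD psi0).
apply/matrixP => i j; rewrite (ord1 j) !mxE summxE; apply: eq_bigr => l _.
rewrite big_ord1 -[x l 0]intz scaler_int morph_add_mulrz //.
by rewrite -scaler_int intz !mxE mulrC.
Qed.

Lemma eq_mulmx_cV (R : pzRingType) (m n : nat) (M N : 'M[R]_(m, n)) :
  (forall x : 'cV_n, M *m x = N *m x) -> M = N.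
Proof.
move=> MN; apply/matrixP => i j.
by have /matrixP/(_ i 0) := MN (delta_mx j 0); rewrite -!colE !mxE.
Qed.

Lemma map_invmx_unit (R S : comUnitRingType) (f : {rmorphism R -> S})
    (n : nat) (M : 'M[R]_n) :
  M \in unitmx -> map_mx f (invmx M) = invmx (map_mx f M).
Proof.
move=> Mu; have Mfu : map_mx f M \in unitmx.
  by rewrite unitmxE det_map_mx rmorph_unit // -unitmxE.
by rewrite /invmx Mu Mfu map_mxZ map_mx_adj det_map_mx rmorphV // -unitmxE.
Qed.

Section Diagonalizable.
Variables (F : fieldType) (n : nat).
Implicit Types M N P : 'M[F]_n.

Lemma is_diag_mx_invmx (d : 'rV[F]_n) : is_diag_mx (invmx (diag_mx d)).
Proof.
have [Du|Dnu] := boolP (diag_mx d \in unitmx); last first.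
  by rewrite /invmx (negPf Dnu) diag_mx_is_diag.
have entry i j : d 0 i * invmx (diag_mx d) i j = (i == j)%:R.
  by have /matrixP/(_ i j) := mulmxV Du; rewrite mul_diag_mx !mxE.
apply/is_diag_mxP => i j ij.
have di : d 0 i != 0.
  by apply: contra_eq_neq (entry i i) => ->; rewrite mul0r eqxx eq_sym oner_eq0.
by apply: (mulfI di); rewrite entry mulr0 -(inj_eq val_inj) (negPf ij).
Qed.

Lemma similar_diagonalizable P M N : P \in unitmx -> similar P M N ->
  diagonalizable M -> diagonalizable N.
Proof.
move=> Pu /eqP PMN [R Ru RM]; exists (R *m invmx P).
  by rewrite unitmx_mul Ru unitmx_inv.
by rewrite /similar_to conjuMumx ?unitmx_inv // -PMN conjmxK.
Qed.

Lemma invmx_conjmx P M : P \in unitmx -> M \in unitmx ->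
  conjmx P (invmx M) = invmx (conjmx P M).
Proof.
move=> Pu Mu; rewrite !conjumx //.
have XY : P *m M *m invmx P *m (P *m invmx M *m invmx P) = 1%:M.
  by rewrite !mulmxA mulmxKV // mulmxK // mulmxV.
by have [Xu _] := mulmx1_unit XY; rewrite -[RHS]mulmx1 -XY (mulKmx Xu).
Qed.

Lemma diagonalizable_invmx M : M \in unitmx ->
  diagonalizable M -> diagonalizable (invmx M).
Proof.
move=> Mu [P Pu /similar_diagPex[d PMd]]; exists P => //.
by rewrite /similar_to invmx_conjmx // (eqP PMd) is_diag_mx_invmx.
Qed.

End Diagonalizable.

Lemma mxC_unitmx (k : nat) (A : 'M[int]_k) : SLZ A -> mxC A \in unitmx.
Proof. by move=> detA; rewrite unitmxE det_map_mx detA rmorph1 unitr1. Qed.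

Lemma det_subr1_neq0 (k : nat) (A : 'M[int]_k) :
  (forall a : algC, eigenvalue (mxC A) a -> a != 1) -> \det (A - 1) != 0.
Proof.
move=> eig1; have : ~~ eigenvalue (mxC A) 1 by apply/negP => /eig1; rewrite eqxx.
rewrite /eigenvalue /eigenspace negbK kermx_eq0 row_free_unit unitmxE unitfE.
by rewrite /mxC -(rmorph1 intr) -map_scalar_mx -map_mxB det_map_mx intr_eq0.
Qed.

Definition SA_hom (k : nat) (A B : 'M[int]_k)
    (f : SA_carrier k -> SA_carrier k) :=
  forall g h, f (SA_mul A g h) = SA_mul B (f g) (f h).

Section SemidirectProduct.
Variables (k : nat) (A : 'M[int]_k).
Implicit Types (x y : 'cV[int]_k) (a b : int).

Lemma mxzpow1 : mxzpow A 1 = A.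
Proof. exact: expr1. Qed.

Lemma mxzpowN1 : mxzpow A (-1) = invmx A.
Proof. exact: expr1. Qed.

Lemma SA_mul_vec x y : SA_mul A (0, x) (0, y) = (0, x + y).
Proof. by rewrite /SA_mul /= addr0 expr0 mul1mx. Qed.

Lemma SA_mul_int a b : SA_mul A (a, 0) (b, 0) = (a + b, 0).
Proof. by rewrite /SA_mul /= mulmx0 addr0. Qed.

Lemma SA_mul_vec_int x a : SA_mul A (0, x) (a, 0) = (a, x).
Proof. by rewrite /SA_mul /= add0r mulmx0 addr0. Qed.

Lemma SA_mul_gen_vec y : SA_mul A (1, 0) (0, y) = SA_mul A (0, A *m y) (1, 0).
Proof. by rewrite /SA_mul /= expr1 mulmx0 !addr0 add0r. Qed.

End SemidirectProduct.

Section Homomorphism.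
Variables (k : nat) (A B : 'M[int]_k) (f : SA_carrier k -> SA_carrier k).
Hypothesis fM : SA_hom A B f.

Lemma SA_hom_fst g h : (f (SA_mul A g h)).1 = (f g).1 + (f h).1.
Proof. by rewrite fM. Qed.

Lemma SA_hom_fst_int (a : int) : (f (a, 0)).1 = a * (f (1, 0)).1.
Proof.
pose phi b := (f (b, 0)).1.
have phiD : {morph phi : b c / b + c}.
  by move=> b c; rewrite /phi -SA_hom_fst SA_mul_int.
by rewrite -[in LHS](intz a) -/(phi _) morph_add_mulrz // mulrzz mulrC.
Qed.

Lemma SA_hom_fst_vec0 : \det (A - 1) != 0 -> forall x, (f (0, x)).1 = 0.
Proof.
move=> detA1 x; pose phi y := (f (0, y)).1.
have phiD : {morph phi : y z / y + z}.
  by move=> y z; rewrite /phi -SA_hom_fst SA_mul_vec.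
have phiA y : phi (A *m y) = phi y.
  apply: (addIr (f (1, 0)).1).
  by rewrite [RHS]addrC /phi -!SA_hom_fst SA_mul_gen_vec.
have phiN y : phi (- y) = - phi y by rewrite -mulrN1z morph_add_mulrz // mulrN1z.
have detA1x : x *~ \det (A - 1) = A *m (\adj (A - 1) *m x) - \adj (A - 1) *m x.
  rewrite -scaler_int intz -mul_scalar_mx -mul_mx_adj mulmxA.
  by rewrite mulmxBl mul1mx mulmxBl.
have : phi (x *~ \det (A - 1)) = 0 by rewrite detA1x phiD phiN phiA subrr.
rewrite morph_add_mulrz // mulrzz => /eqP.
by rewrite mulf_eq0 (negPf detA1) orbF => /eqP.
Qed.

Lemma SA_hom_vec_mulmx : \det (A - 1) != 0 ->
  exists P : 'M[int]_k, forall x, f (0, x) = (0, P *m x).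
Proof.
move=> detA1; have f0 := SA_hom_fst_vec0 detA1.
have [P fP] : exists P : 'M[int]_k, forall x, (f (0, x)).2 = P *m x.
  apply: additive_int_mulmx => x y.
  by rewrite -(SA_mul_vec A) fM /SA_mul f0 /= expr0 mul1mx.
by exists P => x; rewrite -fP; move: (f0 x); case: (f (0, x)) => a b /= ->.
Qed.

Lemma SA_hom_conj (P : 'M[int]_k) : (forall x, f (0, x) = (0, P *m x)) ->
  mxzpow B (f (1, 0)).1 *m P = P *m A.
Proof.
move=> fP; apply: eq_mulmx_cV => x.
have := congr1 (fun g => (f g).2) (SA_mul_gen_vec A x); rewrite /= !fM !fP.
case: (f (1, 0)) => m v; rewrite /SA_mul /= expr0 mul1mx addrC => /addIr.
by rewrite !mulmxA.
Qed.

End Homomorphism.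

Lemma SA_hom_inv (k : nat) (A B : 'M[int]_k)
    (f g : SA_carrier k -> SA_carrier k) :
  cancel f g -> cancel g f -> SA_hom A B f -> SA_hom B A g.
Proof. by move=> fK gK fM u v; apply: (can_inj fK); rewrite fM !gK. Qed.

Lemma SA_iso_gen_fst_pm1 (k : nat) (A B : 'M[int]_k)
    (f : SA_carrier k -> SA_carrier k) :
  bijective f -> SA_hom A B f -> (forall x, (f (0, x)).1 = 0) ->
  (f (1, 0)).1 = 1 \/ (f (1, 0)).1 = -1.
Proof.
move=> [g fK gK] fM f0; have := congr1 fst (gK (1, 0)).
case: (g (1, 0)) => a w; rewrite -(SA_mul_vec_int A) (SA_hom_fst fM) f0 add0r.
rewrite (SA_hom_fst_int fM) => /intUnitRing.unitzPl; rewrite qualifE.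
by case/orP => /eqP; [left | right].
Qed.

Theorem corollary3p6 (k : nat) (A B : 'M[int]_k) :
  (1 <= k)%N -> SLZ A -> SLZ B ->
  diagonal_type A -> non_diagonal_type B ->
  ~ SA_isomorphic A B.
Proof.
move=> _ detA detB [diagA eigA] [ndiagB eigB] [f [f_bij fM]].
have [g fK gK] := f_bij.
have [P fP] := SA_hom_vec_mulmx fM (det_subr1_neq0 eigA).
have [Q gQ] := SA_hom_vec_mulmx (SA_hom_inv fK gK fM) (det_subr1_neq0 eigB).
have PQ : P *m Q = 1%:M.
  by apply: eq_mulmx_cV => y; have := gK (0, y); rewrite gQ fP mul1mx mulmxA => -[].
have [Pu _] : mxC P \in unitmx /\ mxC Q \in unitmx.
  by apply: mulmx1_unit; rewrite -map_mxM PQ map_mx1.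
have simAB : similar (mxC P) (mxC A) (mxC (mxzpow B (f (1, 0)).1)).
  by apply/similarP; rewrite // -!map_mxM (SA_hom_conj fM fP).
have diagBm := similar_diagonalizable Pu simAB diagA.
have f0 x : (f (0, x)).1 = 0 by rewrite fP.
apply: ndiagB; have [m1|m1] := SA_iso_gen_fst_pm1 f_bij fM f0.
  by rewrite m1 mxzpow1 in diagBm.
have Bu : B \in unitmx by rewrite unitmxE detB unitr1.
rewrite m1 mxzpowN1 /mxC map_invmx_unit // in diagBm.
rewrite -[mxC B]invmxK; apply: diagonalizable_invmx => //.
by rewrite unitmx_inv; apply: mxC_unitmx.
Qed.
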